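(* Let $P\subseteq\mathbb{C}$ be a finitely generated field extension of $\mathbb{Q}$, $q$ a prime, and $\epsilon$ a root of unity of order $q$. If $a\in P$ is $q$-simple in $P$, then $a$ is $q$-simple in $P(\epsilon)$.
   Context: $\mu$ is the group of all roots of unity in $\mathbb{C}^\times$. For a field $K\subseteq\mathbb{C}$ and integer $k>1$, a nonzero $a\in K$ is $k$-simple in $K$ if $a\notin\mu$ and for all $b\in K$, $\epsilon\in\mu$ and integers $d$, $a^d=b^k\epsilon$ implies $k\mid d$. *)

From HB Require Import structures.
From mathcomp Require Import all_boot all_order all_algebra.
From mathcomp Require Import reals.
From mathcomp.real_closed Require Import complex.
Set Implicit Arguments. Unset Strict Implicit. Unset Printing Implicit Defensive.
Import Order.TTheory GRing.Theory Num.Theory.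
Local Open Scope ring_scope.

Section Defs.
Variable R : realType.
Local Notation C := (R[i]).

Definition is_subfield (K : C -> Prop) : Prop :=
  K 1 /\
  (forall x y, K x -> K y -> K (x - y)) /\
  (forall x y, K x -> K y -> K (x * y)) /\
  (forall x, K x -> x != 0 -> K x^-1).

Definition gen_field (S : C -> Prop) : C -> Prop :=
  fun x => forall L, is_subfield L -> (forall y, S y -> L y) -> L x.

(* K is finitely generated over Q: K is the subfield generated by a finite
   list of elements (every subfield of C contains Q). *)
Definition fin_gen_over_Q (K : C -> Prop) : Prop :=
  exists s : seq C, forall x, K x <-> gen_field (fun y => y \in s) x.

Definition adjoin (K : C -> Prop) (e : C) : C -> Prop :=
  gen_field (fun y => K y \/ y = e).

Definition root_of_unity (x : C) : Prop := exists n : nat, (0 < n)%N /\ x ^+ n = 1.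

Definition k_simple (k : nat) (K : C -> Prop) (a : C) : Prop :=
  K a /\ a != 0 /\ ~ root_of_unity a /\
  (forall (b eps : C) (d : int), K b -> root_of_unity eps ->
      a ^ d = b ^+ k * eps -> (k%:Z %| d)%Z).
End Defs.

From Pilot Require Import Defs.
From HB Require Import structures.
From mathcomp Require Import all_boot all_order all_algebra.
From mathcomp Require Import boolp reals zify.
From mathcomp Require classical_sets.
From mathcomp.real_closed Require Import complex.
Set Implicit Arguments. Unset Strict Implicit. Unset Printing Implicit Defensive.
Import GRing.Theory.
Local Open Scope ring_scope.

(* Let n = [P(eps) : P]. Since eps is a root of 1 + X + ... + X^(q-1), n < q, so n is
   coprime to q. Every element of P(eps) is g(eps) for a polynomial g over P, and
   det g(A), for A a matrix whose characteristic polynomial is the minimal polynomial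
   of eps, is the norm N : P(eps) -> P. It is multiplicative, sends roots of unity to
   roots of unity and is c |-> c^n on P, so a^d = b^q eta with b, eta in P(eps)
   gives a^(dn) = N(b)^q N(eta) in P. Hence q | dn, and q | d. *)

Section SubfieldClosure.
Variables (R : realType) (K : R[i] -> Prop).
Hypothesis K_subfield : is_subfield K.

Lemma subfield0 : K 0.
Proof. by case: K_subfield => K1 [KB _]; rewrite -(subrr 1); apply: KB. Qed.

Lemma subfieldXn x n : K x -> K (x ^+ n).
Proof.
case: K_subfield => K1 [_ [KM _]] Kx.
by elim: n => [|n IHn]; rewrite ?expr0 // exprS; apply: KM.
Qed.

Lemma subfieldV x : K x -> K x^-1.
Proof.
case: K_subfield => _ [_ [_ KV]] Kx.
by have [->|x0] := eqVneq x 0; [rewrite invr0; apply: subfield0 | apply: KV].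
Qed.

Lemma subfieldXz x (d : int) : K x -> K (x ^ d).
Proof.
move=> Kx; case: d => n; first exact: subfieldXn.
by rewrite NegzE -exprnN; apply/subfieldV/subfieldXn.
Qed.

Lemma gen_field_subfield (S : R[i] -> Prop) : is_subfield (gen_field S).
Proof.
split; [|split; [|split]].
- by move=> L [].
- move=> x y Sx Sy L hL SL; case: (hL) => _ [LB _].
  exact: LB (Sx _ hL SL) (Sy _ hL SL).
- move=> x y Sx Sy L hL SL; case: (hL) => _ [_ [LM _]].
  exact: LM (Sx _ hL SL) (Sy _ hL SL).
- move=> x Sx x0 L hL SL; case: (hL) => _ [_ [_ LV]].
  exact: LV (Sx _ hL SL) x0.
Qed.

End SubfieldClosure.

Section NormTransfer.
Variables (R : realType) (K L : R[i] -> Prop) (N : R[i] -> R[i]) (k m : nat).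
Hypotheses (K_subfield : is_subfield K) (L_subfield : is_subfield L).
Hypotheses (sub_KL : forall x, K x -> L x) (N_in : forall x, L x -> K (N x)).
Hypothesis NM : forall x y, L x -> L y -> N (x * y) = N x * N y.
Hypothesis N_base : forall c, K c -> N c = c ^+ m.
Hypothesis coprime_mk : coprime m k.

Lemma norm1 : N 1 = 1.
Proof. by rewrite N_base ?expr1n //; case: K_subfield. Qed.

Lemma normXn x j : L x -> N (x ^+ j) = N x ^+ j.
Proof.
move=> Lx; elim: j => [|j IHj]; first by rewrite !expr0 norm1.
by rewrite !exprSr NM ?IHj //; apply: subfieldXn.
Qed.

Lemma norm_root_of_unity eta :
  L eta -> Defs.root_of_unity eta -> Defs.root_of_unity (N eta).
Proof. by move=> Leta [j [j0 etaj]]; exists j; rewrite -normXn // etaj norm1. Qed.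

Lemma k_simple_norm_transfer a : k_simple k K a -> k_simple k L a.
Proof.
case=> Ka [a0 [a_nru a_simple]]; split; first exact: sub_KL.
do 2!split => //; move=> b eta d Lb eta_ru Eab.
have bk0 : b ^+ k != 0.
  by apply: contraTneq (expfz_neq0 d a0) => b0; rewrite Eab b0 mul0r eqxx.
have Leta : L eta.
  have -> : eta = a ^ d * (b ^+ k)^-1 by rewrite Eab mulrAC divff ?mul1r.
  case: L_subfield => _ [_ [LM _]]; apply: LM.
    exact/sub_KL/(subfieldXz K_subfield).
  exact/(subfieldV L_subfield)/(subfieldXn L_subfield).
have ENab : a ^ (d * m%:Z) = N b ^+ k * N eta.
  rewrite -exprz_exp -[_ ^ m%:Z]/(_ ^+ m) -N_base; last exact: subfieldXz.
  by rewrite Eab NM ?normXn //; apply: subfieldXn.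
have := a_simple _ _ _ (N_in Lb) (norm_root_of_unity Leta eta_ru) ENab.
by rewrite Gauss_dvdzl // coprimezE /= coprime_sym.
Qed.

End NormTransfer.

Lemma char_poly_mx_of_monic (F : comNzRingType) (p : {poly F}) :
  p \is monic -> (1 < size p)%N ->
  exists n (A : 'M[F]_n.+1), char_poly A = p /\ size p = n.+2.
Proof.
move=> p_monic; have := companionmxK p_monic.
by case: (size p) (companionmx p) => [|[|n]] // A cA _; exists n, A.
Qed.

Section AlgebraicEvaluation.
Variables (F L : fieldType) (f : {rmorphism F -> L}) (z : L).
Local Notation ev := (horner_morph (fun c : F => mulrC z (f c))).

(* For [x = g(z)] this is [det g(A)]: the norm of [x] from [F(z)] to [F] when
   [char_poly A] is the minimal polynomial of [z]. *)
Definition mx_norm n (A : 'M[F]_n.+1) (x : L) : F :=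
  \det (horner_mx A (classical_sets.xget 0 (fun g => ev g = x))).

Lemma primitive_root_annihilator q : (1 < q)%N -> q.-primitive_root z ->
  exists2 g : {poly F}, g != 0 & (size g <= q)%N /\ ev g = 0.
Proof.
move=> q_gt1 z_prim; exists (\poly_(i < q) 1).
  apply/negP => /eqP/polyP/(_ 0%N)/eqP.
  by rewrite coef_poly coef0 ltnW // oner_eq0.
split; first exact: size_poly.
have z1 : z != 1.
  apply: contraTneq q_gt1 => z1; have := prim_order_dvd z_prim 1.
  by rewrite z1 expr1 eqxx dvdn1 => /eqP ->.
have : (z - 1) * ev (\poly_(i < q) 1) = 0.
  rewrite poly_def rmorph_sum.
  under eq_bigr => i _ do rewrite scale1r rmorphXn /= horner_morphX.
  by rewrite -subrX1 (prim_expr_order z_prim) subrr.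
by move/eqP; rewrite mulf_eq0 subr_eq0 (negPf z1) => /eqP.
Qed.

Lemma exists_minimal_poly (g0 : {poly F}) : g0 != 0 -> ev g0 = 0 ->
  exists p : {poly F}, [/\ p \is monic, ev p = 0, (size p <= size g0)%N &
    forall g, g != 0 -> ev g = 0 -> (size p <= size g)%N].
Proof.
move=> g0_neq0 g0_root.
pose annihilator_size n := `[< exists2 g : {poly F}, g != 0 & size g = n /\ ev g = 0 >].
have [|n /asboolP[g g_neq0 [<- g_root]] g_min] := ex_minnP (P := annihilator_size).
  by exists (size g0); apply/asboolP; exists g0.
have lc_neq0 : lead_coef g != 0 by rewrite lead_coef_eq0.
have size_gZ : size ((lead_coef g)^-1 *: g) = size g by rewrite size_scale ?invr_eq0.
exists ((lead_coef g)^-1 *: g); rewrite size_gZ; split.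
- by rewrite monicE lead_coefZ mulVf.
- by rewrite -mul_polyC rmorphM /= g_root mulr0.
- by apply: g_min; apply/asboolP; exists g0.
- by move=> h h_neq0 h_root; apply: g_min; apply/asboolP; exists h.
Qed.

Section MinimalPoly.
Variable p : {poly F}.
Hypotheses (p_monic : p \is monic) (p_root : ev p = 0).
Hypothesis p_min : forall g, g != 0 -> ev g = 0 -> (size p <= size g)%N.

Lemma size_min_poly_gt1 : (1 < size p)%N.
Proof.
rewrite ltnNge; apply/negP => /size1_polyC p_const; move: p_root p_monic.
rewrite p_const horner_morphC monicE lead_coefC => /eqP; rewrite fmorph_eq0 => /eqP->.
by rewrite eq_sym oner_eq0.
Qed.

Lemma min_poly_dvdp g : ev g = 0 -> p %| g.
Proof.
move=> g_root; apply/modp_eq0P/eqP.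
apply: contraTT (ltn_modpN0 g (monic_neq0 p_monic)) => r_neq0; rewrite -leqNgt.
apply: p_min => //; have -> : g %% p = g - g %/ p * p.
  by apply/eqP; rewrite eq_sym subr_eq addrC -divp_eq.
by rewrite rmorphB rmorphM /= g_root p_root mulr0 subrr.
Qed.

Lemma coprimep_min_poly g : ev g != 0 -> coprimep p g.
Proof.
move=> g_nroot; rewrite coprimep_def; set d := gcdp p g.
have p_neq0 : p != 0 := monic_neq0 p_monic.
have d_neq0 : d != 0 by rewrite gcdp_eq0 negb_and p_neq0.
have d_nroot : ev d != 0.
  apply: contraNneq g_nroot; rewrite -(divpK (dvdp_gcdr p g)) rmorphM /= => ->.
  by rewrite mulr0.
have quot_root : ev (p %/ d) = 0.
  apply/eqP; move: p_root; rewrite -{1}(divpK (dvdp_gcdl p g)) rmorphM /= => /eqP.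
  by rewrite mulf_eq0 (negPf d_nroot) orbF.
have quot_neq0 : p %/ d != 0.
  by rewrite divp_eq0 negb_or p_neq0 negb_or d_neq0 -leqNgt leq_gcdpl.
have := p_min quot_neq0 quot_root; rewrite size_divp //.
have : (0 < size d)%N by rewrite size_poly_gt0.
have : (0 < size p)%N by rewrite size_poly_gt0.
move: (size d) (size p) => a b; lia.
Qed.

Lemma min_poly_inverse g : ev g != 0 -> exists u, ev u * ev g = 1.
Proof.
move=> g_nroot; have /Bezout_eq1_coprimepP[[u v] /= uv1] := coprimep_min_poly g_nroot.
exists v; have := congr1 ev uv1.
by rewrite rmorphD !rmorphM /= p_root mulr0 add0r rmorph1.
Qed.

Section Norm.
Variables (n : nat) (A : 'M[F]_n.+1).
Hypothesis A_char : char_poly A = p.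

Lemma horner_mx_ev_eq g h : ev g = ev h -> horner_mx A g = horner_mx A h.
Proof.
move=> gh; have /dvdpP[k gh_k] : p %| g - h.
  by apply: min_poly_dvdp; rewrite rmorphB /= gh subrr.
apply/eqP; rewrite -subr_eq0 -rmorphB gh_k rmorphM /= -A_char.
by rewrite Cayley_Hamilton mulr0.
Qed.

Lemma mx_norm_ev g : mx_norm A (ev g) = \det (horner_mx A g).
Proof.
rewrite /mx_norm; congr (\det _); apply: horner_mx_ev_eq.
by apply: (@classical_sets.xgetPex _ 0 (fun h => ev h = ev g)); exists g.
Qed.

Lemma mx_normM g h : mx_norm A (ev g * ev h) = mx_norm A (ev g) * mx_norm A (ev h).
Proof. by rewrite -rmorphM !mx_norm_ev rmorphM detM. Qed.

Lemma mx_norm_base c : mx_norm A (f c) = c ^+ n.+1.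
Proof.
by rewrite -(horner_morphC (fun c => mulrC z (f c))) mx_norm_ev horner_mx_C det_scalar.
Qed.
End Norm.
End MinimalPoly.
End AlgebraicEvaluation.

Section AdjoinRootOfUnity.
Variables (R : realType) (P : R[i] -> Prop).
Hypothesis P_subfield : is_subfield P.

Definition subfield_pred : {pred R[i]} := fun x => `[< P x >].

Lemma subfield_predP x : reflect (P x) (x \in subfield_pred).
Proof. exact: asboolP. Qed.

Lemma subfield_pred_divring_closed : GRing.divring_closed subfield_pred.
Proof.
case: P_subfield => P1 [PB [PM _]]; split; first exact/subfield_predP.
  by move=> x y /subfield_predP Px /subfield_predP Py; apply/subfield_predP/PB.
move=> x y /subfield_predP Px /subfield_predP Py; apply/subfield_predP.
by apply: PM => //; apply: subfieldV.
Qed.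

Record subfield_elt := SubfieldElt {
  subfield_val : R[i];
  _ : subfield_val \in subfield_pred }.
HB.instance Definition _ := [isSub for subfield_val].
HB.instance Definition _ := [Choice of subfield_elt by <:].
HB.instance Definition _ :=
  GRing.SubChoice_isSubIntegralDomain.Build _ _ subfield_elt subfield_pred_divring_closed.
HB.instance Definition _ := [SubIntegralDomain_isSubField of subfield_elt by <:].

Variable eps : R[i].
Local Notation ev := (horner_morph (fun c : subfield_elt => mulrC eps (val c))).

Section EvImage.
Variable p : {poly subfield_elt}.
Hypotheses (p_monic : p \is monic) (p_root : ev p = 0).
Hypothesis p_min : forall g, g != 0 -> ev g = 0 -> (size p <= size g)%N.

Lemma ev_image_subfield : is_subfield (fun x => exists g, x = ev g).
Proof.
split; first by exists 1; rewrite rmorph1.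
split; first by move=> _ _ [g ->] [h ->]; exists (g - h); rewrite rmorphB.
split; first by move=> _ _ [g ->] [h ->]; exists (g * h); rewrite rmorphM.
move=> _ [g ->] g_nroot; have [u ug1] := min_poly_inverse p_monic p_root p_min g_nroot.
by exists u; apply: (mulIf g_nroot); rewrite ug1 mulVf.
Qed.

Lemma adjoin_sub_ev_image x : adjoin P eps x -> exists g, x = ev g.
Proof.
move/(_ _ ev_image_subfield); apply=> y [Py|->].
  by exists (SubfieldElt (introT (subfield_predP y) Py))%:P; rewrite horner_morphC.
by exists 'X; rewrite horner_morphX.
Qed.
End EvImage.

Lemma adjoin_prime_root_norm q : prime q -> q.-primitive_root eps ->
  exists (N : R[i] -> R[i]) (m : nat), [/\ coprime m q,
    forall x, adjoin P eps x -> P (N x),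
    forall x y, adjoin P eps x -> adjoin P eps y -> N (x * y) = N x * N y &
    forall c, P c -> N c = c ^+ m].
Proof.
move=> q_prime eps_prim.
have [w w_neq0 [size_w w_root]] :=
  primitive_root_annihilator (F := subfield_elt) val (prime_gt1 q_prime) eps_prim.
have [p [p_monic p_root size_p p_min]] := exists_minimal_poly w_neq0 w_root.
have [n [A [A_char size_pA]]] :=
  char_poly_mx_of_monic p_monic (size_min_poly_gt1 p_monic p_root).
have image := adjoin_sub_ev_image p_monic p_root p_min.
exists (fun x => val (mx_norm val eps A x)), n.+1; split.
- rewrite coprime_sym prime_coprime // gtnNdvd //.
  by rewrite -size_pA (leq_trans size_p size_w).
- by move=> x _; apply/subfield_predP/valP.
- move=> _ _ /image[g ->] /image[h ->].
  by rewrite (mx_normM p_monic p_root p_min A_char) rmorphM.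
- move=> c Pc; pose c' := SubfieldElt (introT (subfield_predP c) Pc).
  by rewrite -[c]/(val c') (mx_norm_base p_monic p_root p_min A_char) rmorphXn.
Qed.

End AdjoinRootOfUnity.

Theorem lemma2p9 (R : realType) (P : R[i] -> Prop) (q : nat) (eps a : R[i]) :
  is_subfield P -> fin_gen_over_Q P -> prime q -> q.-primitive_root eps ->
  k_simple q P a -> k_simple q (adjoin P eps) a.
Proof.
move=> P_subfield _ q_prime eps_prim.
have [N [m [coprime_mq N_in NM N_base]]] :=
  adjoin_prime_root_norm P_subfield q_prime eps_prim.
have P_sub_adjoin x : P x -> adjoin P eps x.
  by move=> Px L _ sub_L; apply: sub_L; left.
exact: (k_simple_norm_transfer P_subfield (gen_field_subfield _) P_sub_adjoin
  N_in NM N_base coprime_mq).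
Qed.
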